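(* Let $\mathcal{H}_A,\mathcal{H}_B$ have finite dimensions and let $\rho$ be any state on $\mathcal{H}_A\otimes\mathcal{H}_B$. Then $\mathcal{D}^A_G(\rho)=\mathcal{D}^A_{h=1,p=2}(\rho)$.
   Context: Let $d=\min\{\dim\mathcal{H}_A,\dim\mathcal{H}_B\}$. Let $\{A_i\}$, $\{B_j\}$ be orthonormal bases (w.r.t. the Hilbert–Schmidt inner product $\mathrm{tr}(XY)$) of the real spaces of Hermitian operators on $\mathcal{H}_A$, $\mathcal{H}_B$, and for a state $\sigma$ let $\mathcal{C}(\sigma)_{ij}=\mathrm{tr}(\sigma\,A_i\otimes B_j)$ with singular values $\sigma_1,\ldots,\sigma_{d^2}$. Then $\mathcal{M}_{1,2}(\sigma)=(\sum_k\sigma_k^2)^{1/2}$. A projective measurement $\Pi^A$ on $A$ is given by an orthonormal basis $\{|l\rangle\}$ of $\mathcal{H}_A$ and acts by $\Pi^A[\rho]=\sum_l(|l\rangle\langle l|\otimes\mathbb{1})\rho(|l\rangle\langle l|\otimes\mathbb{1})$. Define $\mathcal{D}^A_{1,2}(\rho)=\mathcal{M}_{1,2}(\rho)^2-\max_{\Pi^A}\mathcal{M}_{1,2}(\Pi^A[\rho])^2$, the maximum over all projective measurements on $A$. The geometric quantum discord is $\mathcal{D}^A_G(\rho)=\min_\chi\|\rho-\chi\|^2$ (Hilbert–Schmidt norm), minimized over classical-quantum states $\chi=\sum_k p_k|k\rangle\langle k|\otimes\chi_k$ with $\{|k\rangle\}$ an orthonormal basis of $\mathcal{H}_A$, $(p_k)$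 a probability vector and $\chi_k$ states on $\mathcal{H}_B$. *)

From HB Require Import structures.
From mathcomp Require Import all_boot all_order all_algebra.
From mathcomp Require Import complex mxtens.
From mathcomp Require Import classical_sets reals.
Set Implicit Arguments. Unset Strict Implicit. Unset Printing Implicit Defensive.
Import Order.TTheory GRing.Theory Num.Theory.
Local Open Scope ring_scope.
Local Open Scope classical_set_scope.

Section QDefs.
Variable R : realType.
Local Notation C := (R[i]).

Definition adjmx {m n : nat} (X : 'M[C]_(m, n)) : 'M[C]_(n, m) :=
  (map_mx Num.conj X)^T.

Definition hermitian {n : nat} (X : 'M[C]_n) : Prop := adjmx X = X.

Definition psd {n : nat} (X : 'M[C]_n) : Prop :=
  forall v : 'cV[C]_n, 0 <= (adjmx v *m X *m v) 0 0.

Definition is_state {n : nat} (X : 'M[C]_n) : Prop :=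
  [/\ hermitian X, psd X & \tr X = 1].

Definition unitary {n : nat} (U : 'M[C]_n) : Prop := adjmx U *m U = 1%:M.

Definition proj1 {n : nat} (u : 'cV[C]_n) : 'M[C]_n := u *m adjmx u.

Definition herm_onb {n : nat} (E : 'I_(n * n) -> 'M[C]_n) : Prop :=
  [/\ (forall i, hermitian (E i)),
      (forall i j, \tr (E i *m E j) = (i == j)%:R) &
      (forall X : 'M[C]_n, hermitian X ->
         exists c : 'I_(n * n) -> R, X = \sum_i (c i)%:C%C *: E i)].

(* correlation matrix C(sigma)_{ij} = tr(sigma A_i (x) B_j)  (real for Hermitian sigma) *)
Definition corrmx {dA dB : nat} (EA : 'I_(dA * dA) -> 'M[C]_dA)
  (EB : 'I_(dB * dB) -> 'M[C]_dB) (s : 'M[C]_(dA * dB)) :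
  'M[R]_(dA * dA, dB * dB) :=
  \matrix_(i, j) complex.Re (\tr (s *m (EA i *t EB j))).

(* M_{1,2}(sigma) = (sum_k sigma_k^2)^(1/2), where the sigma_k are the singular
   values of C(sigma), i.e. sigma_k^2 are the eigenvalues of C^T C, so that
   sum_k sigma_k^2 = tr (C^T C). *)
Definition M12 {dA dB : nat} (EA : 'I_(dA * dA) -> 'M[C]_dA)
  (EB : 'I_(dB * dB) -> 'M[C]_dB) (s : 'M[C]_(dA * dB)) : R :=
  Num.sqrt (\tr ((corrmx EA EB s)^T *m corrmx EA EB s)).

Definition measA {dA dB : nat} (U : 'M[C]_dA) (rho : 'M[C]_(dA * dB)) :
  'M[C]_(dA * dB) :=
  \sum_(l < dA) ((proj1 (col l U) *t (1%:M : 'M[C]_dB)) *m rho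
                   *m (proj1 (col l U) *t (1%:M : 'M[C]_dB))).

Definition D12 {dA dB : nat} (EA : 'I_(dA * dA) -> 'M[C]_dA)
  (EB : 'I_(dB * dB) -> 'M[C]_dB) (rho : 'M[C]_(dA * dB)) : R :=
  M12 EA EB rho ^+ 2
  - sup [set M12 EA EB (measA U rho) ^+ 2 | U in [set U : 'M[C]_dA | unitary U]].

Definition cq_state {dA dB : nat} (chi : 'M[C]_(dA * dB)) : Prop :=
  exists (U : 'M[C]_dA) (p : 'I_dA -> R) (chis : 'I_dA -> 'M[C]_dB),
    [/\ unitary U, (forall k, 0 <= p k), \sum_k p k = 1,
        (forall k, is_state (chis k)) &
        chi = \sum_k (p k)%:C%C *: (proj1 (col k U) *t chis k)].

Definition hs_norm2 {n : nat} (X : 'M[C]_n) : R := complex.Re (\tr (adjmx X *m X)).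

Definition DG {dA dB : nat} (rho : 'M[C]_(dA * dB)) : R :=
  inf [set hs_norm2 (rho - chi) | chi in [set chi | @cq_state dA dB chi]].

End QDefs.

From Pilot Require Import Defs.
From HB Require Import structures.
From mathcomp Require Import all_boot all_order all_algebra.
From mathcomp Require Import complex mxtens.
From mathcomp Require Import classical_sets reals.
From mathcomp Require Import ring lra.
Set Implicit Arguments. Unset Strict Implicit. Unset Printing Implicit Defensive.
Import Order.TTheory GRing.Theory Num.Theory.
Local Open Scope ring_scope.
Local Open Scope classical_set_scope.

(* Let Pi_U be the measurement in the basis U.  It is an orthogonal projection for the
   Hilbert-Schmidt inner product whose range contains every classical-quantum state in the
   basis U, and Pi_U rho is itself such a state.  By Pythagoras the closest classical-quantum
   state in the basis U is Pi_U rho, at squared distance |rho|^2 - |Pi_U rho|^2, so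
   D_G(rho) = |rho|^2 - sup_U |Pi_U rho|^2.  Finally M_{1,2}(sigma)^2 = |sigma|^2 for every
   Hermitian sigma: the entries of C(sigma) are the coefficients of sigma in the orthonormal
   basis {A_i (x) B_j}, and Parseval applies. *)

Section ComRingMatrices.
Variable K : comPzRingType.

Lemma tensmx_suml m n p q I (r : seq I) (F : I -> 'M[K]_(m, n)) (Y : 'M[K]_(p, q)) :
  (\sum_(i <- r) F i) *t Y = \sum_(i <- r) F i *t Y.
Proof.
apply/matrixP=> i j; rewrite mxE !summxE big_distrl /=.
by apply: eq_bigr => k _; rewrite mxE.
Qed.

Lemma tensmx_sumr m n p q I (r : seq I) (X : 'M[K]_(m, n)) (F : I -> 'M[K]_(p, q)) :
  X *t (\sum_(i <- r) F i) = \sum_(i <- r) X *t F i.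
Proof.
apply/matrixP=> i j; rewrite mxE !summxE big_distrr /=.
by apply: eq_bigr => k _; rewrite mxE.
Qed.

Lemma tensmxZl m n p q c (X : 'M[K]_(m, n)) (Y : 'M[K]_(p, q)) :
  (c *: X) *t Y = c *: (X *t Y).
Proof. by apply/matrixP=> i j; rewrite !mxE mulrA. Qed.

Lemma tensmxZr m n p q c (X : 'M[K]_(m, n)) (Y : 'M[K]_(p, q)) :
  X *t (c *: Y) = c *: (X *t Y).
Proof. by apply/matrixP=> i j; rewrite !mxE mulrCA. Qed.

Lemma mxtrace_tens m n (X : 'M[K]_m) (Y : 'M[K]_n) : \tr (X *t Y) = \tr X * \tr Y.
Proof. by rewrite /mxtrace mulr_sum; apply: eq_bigr => k _; rewrite mxE. Qed.

Lemma delta_mx_tens m n (i1 i2 : 'I_m) (j1 j2 : 'I_n) :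
  delta_mx (mxtens_index (i1, j1)) (mxtens_index (i2, j2))
  = delta_mx i1 i2 *t delta_mx j1 j2 :> 'M[K]_(m * n).
Proof.
apply/matrixP=> k l; case: (mxtens_indexP k) => a b; case: (mxtens_indexP l) => c d.
rewrite tensmxE !mxE -natrM !(inj_eq (can_inj (@mxtens_indexK m n))) !xpair_eqE.
by case: (a == i1); case: (b == j1); case: (c == i2); case: (d == j2).
Qed.

Lemma tensmx11 m n : (1%:M : 'M[K]_m) *t (1%:M : 'M[K]_n) = 1%:M.
Proof.
apply/matrixP=> k l; case: (mxtens_indexP k) => a b; case: (mxtens_indexP l) => c d.
rewrite tensmxE !mxE -natrM (inj_eq (can_inj (@mxtens_indexK m n))) xpair_eqE.
by case: (a == c); case: (b == d).
Qed.

Lemma mxtrace_trmx_mul m n (A : 'M[K]_(m, n)) :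
  \tr (A^T *m A) = \sum_i \sum_j A i j ^+ 2.
Proof.
rewrite /mxtrace exchange_big; apply: eq_bigr => j _.
by rewrite mxE; apply: eq_bigr => i _; rewrite !mxE expr2.
Qed.

End ComRingMatrices.

Section ConjugateTranspose.
Variable R : realType.
Local Notation C := R[i].

Lemma adjmxD m n (X Y : 'M[C]_(m, n)) : adjmx (X + Y) = adjmx X + adjmx Y.
Proof. by rewrite /adjmx !raddfD. Qed.

Lemma adjmxB m n (X Y : 'M[C]_(m, n)) : adjmx (X - Y) = adjmx X - adjmx Y.
Proof. by rewrite /adjmx !raddfB. Qed.

Lemma adjmx_sum m n I (r : seq I) (F : I -> 'M[C]_(m, n)) :
  adjmx (\sum_(i <- r) F i) = \sum_(i <- r) adjmx (F i).
Proof. by rewrite /adjmx !raddf_sum. Qed.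

Lemma adjmxK m n (X : 'M[C]_(m, n)) : adjmx (adjmx X) = X.
Proof. by apply/matrixP=> i j; rewrite !mxE conjCK. Qed.

Lemma adjmxM m n p (X : 'M[C]_(m, n)) (Y : 'M[C]_(n, p)) :
  adjmx (X *m Y) = adjmx Y *m adjmx X.
Proof. by rewrite /adjmx map_mxM trmx_mul. Qed.

Lemma adjmxZ m n (c : C) (X : 'M[C]_(m, n)) : adjmx (c *: X) = c^* *: adjmx X.
Proof. by apply/matrixP=> i j; rewrite !mxE rmorphM. Qed.

Lemma adjmx1 n : adjmx (1%:M : 'M[C]_n) = 1%:M.
Proof. by apply/matrixP=> i j; rewrite !mxE eq_sym rmorph_nat. Qed.

Lemma adjmx_tens m n p q (X : 'M[C]_(m, n)) (Y : 'M[C]_(p, q)) :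
  adjmx (X *t Y) = adjmx X *t adjmx Y.
Proof. by apply/matrixP=> i j; rewrite !mxE rmorphM. Qed.

Lemma mxtrace_adjmx n (X : 'M[C]_n) : \tr (adjmx X) = (\tr X)^*.
Proof. by rewrite /mxtrace rmorph_sum; apply: eq_bigr=> i _; rewrite !mxE. Qed.

Lemma hermitian_tens m n (X : 'M[C]_m) (Y : 'M[C]_n) :
  Defs.hermitian X -> Defs.hermitian Y -> Defs.hermitian (X *t Y).
Proof. by move=> hX hY; rewrite /Defs.hermitian adjmx_tens hX hY. Qed.

Lemma hermitian_proj1 n (u : 'cV[C]_n) : Defs.hermitian (Defs.proj1 u).
Proof. by rewrite /Defs.hermitian /Defs.proj1 adjmxM adjmxK. Qed.

Lemma hermitian_realZ n (r : R) (X : 'M[C]_n) :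
  Defs.hermitian X -> Defs.hermitian (r%:C%C *: X).
Proof.
move=> hX; rewrite /Defs.hermitian adjmxZ hX; congr (_ *: _).
by apply/eqP; rewrite eq_complex /= oppr0 !eqxx.
Qed.

Lemma conjC_i : ('i%C : C)^* = - 'i%C.
Proof. by apply/eqP; rewrite eq_complex /= oppr0 !eqxx. Qed.

Lemma hermitian_decomposition n (Z : 'M[C]_n) :
  exists H1 H2, [/\ Defs.hermitian H1, Defs.hermitian H2 & Z = H1 + 'i%C *: H2].
Proof.
exists (2^-1 *: (Z + adjmx Z)), (2^-1 *: ('i%C *: (adjmx Z - Z))); split.
- by rewrite /Defs.hermitian adjmxZ adjmxD adjmxK fmorphV rmorph_nat addrC.
- rewrite /Defs.hermitian !adjmxZ adjmxB adjmxK fmorphV rmorph_nat conjC_i.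
  by rewrite scaleNr -scalerN opprB.
apply/matrixP=> i j; rewrite !mxE.
set w := (Z j i)^*.
have -> : 'i%C * (2^-1 * ('i%C * (w - Z i j))) = 2^-1 * ('i%C ^+ 2) * (w - Z i j).
  by ring.
by rewrite sqr_i; field.
Qed.

Lemma conj_mxtrace_mul_hermitian n (X Y : 'M[C]_n) :
  Defs.hermitian X -> Defs.hermitian Y -> (\tr (X *m Y))^* = \tr (X *m Y).
Proof.
by move=> hX hY; rewrite -mxtrace_adjmx adjmxM hX hY mxtrace_mulC.
Qed.

Lemma conj_fixed_Re (c : C) : c^* = c -> c = (complex.Re c)%:C%C.
Proof.
case: c => a b [] h; apply/eqP; rewrite eq_complex /= eqxx /=.
apply/eqP; lra.
Qed.

End ConjugateTranspose.

Section HilbertSchmidt.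
Variable R : realType.
Local Notation C := R[i].

Lemma hs_norm2_ge0 n (X : 'M[C]_n) : 0 <= hs_norm2 X.
Proof.
suff : 0 <= \tr (adjmx X *m X) by rewrite lecE => /andP[].
apply: sumr_ge0 => i _; rewrite mxE; apply: sumr_ge0 => j _.
by rewrite !mxE mulrC mul_conjC_ge0.
Qed.

Lemma hs_norm2D_orth n (X Y : 'M[C]_n) :
  \tr (adjmx X *m Y) = 0 -> hs_norm2 (X + Y) = hs_norm2 X + hs_norm2 Y.
Proof.
move=> orthXY.
have orthYX : \tr (adjmx Y *m X) = 0.
  by rewrite -[X]adjmxK -adjmxM mxtrace_adjmx orthXY rmorph0.
rewrite /hs_norm2 adjmxD mulmxDl !mulmxDr !mxtraceD orthXY orthYX.
by rewrite addr0 add0r raddfD.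
Qed.

Section Expansion.
Variables (I : finType) (n : nat) (K : I -> 'M[C]_n).

Definition hs_expand (Z : 'M[C]_n) : 'M[C]_n := \sum_i \tr (Z *m K i) *: K i.

Fact hs_expand_is_linear : linear hs_expand.
Proof.
move=> c Y Z; rewrite /hs_expand scaler_sumr -big_split; apply: eq_bigr => i _.
by rewrite mulmxDl -scalemxAl linearP scalerDl scalerA.
Qed.

Lemma mxtrace_mul_hs_expand (Y Z : 'M[C]_n) :
  \tr (Y *m hs_expand Z) = \sum_i \tr (Z *m K i) * \tr (Y *m K i).
Proof.
rewrite /hs_expand mulmx_sumr raddf_sum /=; apply: eq_bigr => i _.
by rewrite -scalemxAr mxtraceZ.
Qed.

HB.instance Definition _ :=
  GRing.isLinear.Build C 'M[C]_n 'M[C]_n _ hs_expand hs_expand_is_linear.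

End Expansion.

Lemma herm_onb_expand n (E : 'I_(n * n) -> 'M[C]_n) (Z : 'M[C]_n) :
  herm_onb E -> hs_expand E Z = Z.
Proof.
case=> _ orthE spanE.
have expand_herm X : Defs.hermitian X -> hs_expand E X = X.
  move=> /spanE [c ->]; rewrite linear_sum; apply: eq_bigr => i _.
  rewrite linearZ /=; congr (_ *: _).
  rewrite /hs_expand (bigD1 i) //= big1 => [|j ji]; first by rewrite orthE eqxx scale1r addr0.
  by rewrite orthE eq_sym (negbTE ji) scale0r.
have [H1 [H2 [hH1 hH2 ->]]] := hermitian_decomposition Z.
by rewrite linearD linearZ /= !expand_herm.
Qed.

Lemma tens_herm_onb_expand a b (EA : 'I_(a * a) -> 'M[C]_a) (EB : 'I_(b * b) -> 'M[C]_b)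
    (Z : 'M[C]_(a * b)) : herm_onb EA -> herm_onb EB ->
  hs_expand (fun p : 'I_(a * a) * 'I_(b * b) => EA p.1 *t EB p.2) Z = Z.
Proof.
move=> hA hB; set K := fun p : _ * _ => _.
have expand_tens X Y : hs_expand K (X *t Y) = X *t Y.
  rewrite -{2}(herm_onb_expand X hA) -{2}(herm_onb_expand Y hB) /hs_expand tensmx_suml.
  under [in RHS]eq_bigr do rewrite tensmx_sumr.
  rewrite pair_bigA /=; apply: eq_bigr => -[i j] _ /=.
  by rewrite /K tensmx_mul mxtrace_tens tensmxZl tensmxZr scalerA mulrC.
rewrite (matrix_sum_delta Z) linear_sum; apply: eq_bigr => k _.
rewrite linear_sum; apply: eq_bigr => l _.
case: (mxtens_indexP k) => ? ?; case: (mxtens_indexP l) => ? ?.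
by rewrite linearZ /= delta_mx_tens expand_tens.
Qed.

Lemma M12_sqr dA dB (EA : 'I_(dA * dA) -> 'M[C]_dA) (EB : 'I_(dB * dB) -> 'M[C]_dB)
    (s : 'M[C]_(dA * dB)) : herm_onb EA -> herm_onb EB -> Defs.hermitian s ->
  M12 EA EB s ^+ 2 = hs_norm2 s.
Proof.
move=> hA hB hs; set K := fun p : _ * _ => EA p.1 *t EB p.2.
have coef_real p : \tr (s *m K p) = (complex.Re (\tr (s *m K p)))%:C%C.
  apply/conj_fixed_Re/conj_mxtrace_mul_hermitian => //.
  by apply: hermitian_tens; [case: hA | case: hB].
have -> : hs_norm2 s = \sum_p complex.Re (\tr (s *m K p)) ^+ 2.
  rewrite /hs_norm2 hs -{2}(tens_herm_onb_expand s hA hB) mxtrace_mul_hs_expand.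
  under eq_bigr do rewrite coef_real -rmorphM -expr2.
  by rewrite -rmorph_sum.
rewrite /M12 mxtrace_trmx_mul sqr_sqrtr; last by do 2!(apply: sumr_ge0 => ? _); apply: sqr_ge0.
by rewrite pair_bigA; apply: eq_bigr => -[i j] _; rewrite mxE.
Qed.

End HilbertSchmidt.

Section PositiveOperators.
Variable R : realType.
Local Notation C := R[i].

Lemma adjmx_delta_col n (i : 'I_n) : adjmx (delta_mx i 0 : 'cV[C]_n) = delta_mx 0 i.
Proof. by apply/matrixP=> a b; rewrite !mxE rmorph_nat andbC. Qed.

Lemma quad_delta_mx n (X : 'M[C]_n) i j :
  adjmx (delta_mx i 0 : 'cV[C]_n) *m X *m delta_mx j 0 = (X i j)%:M.
Proof.
apply/matrixP=> p q; rewrite !ord1 adjmx_delta_col -rowE !mxE eqxx mulr1n.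
rewrite (bigD1 j) //= big1 => [|k /negbTE kj]; first by rewrite !mxE !eqxx mulr1 addr0.
by rewrite !mxE kj mulr0.
Qed.

Lemma psd_diag n (X : 'M[C]_n) i : psd X -> 0 <= X i i.
Proof. by move/(_ (delta_mx i 0)); rewrite quad_delta_mx mxE eqxx mulr1n. Qed.

Lemma psd_mxtrace_eq0 n (X : 'M[C]_n) :
  Defs.hermitian X -> psd X -> \tr X = 0 -> X = 0.
Proof.
move=> hX pX trX0.
have diag0 i : X i i = 0 by apply: (psumr_eq0P _ trX0) => // k _; apply: psd_diag.
apply/matrixP => a b; rewrite mxE.
have [-> | nab] := eqVneq a b; first exact: diag0.
set x := X a b.
(* Test psd X against -x e_a + e_b: with a vanishing diagonal this gives 0 <= -2 |x|^2. *)
have Xba : X b a = x^* by rewrite -[in LHS]hX !mxE.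
have := pX ((- x) *: delta_mx a 0 + delta_mx b 0).
rewrite adjmxD adjmxZ !(mulmxDl, mulmxDr) -!scalemxAl -!scalemxAr !quad_delta_mx.
rewrite !mxE /= !diag0 Xba -/x.
set e := (X in 0 <= X -> _).
have -> : e = - (x * x^*) *+ 2 by rewrite /e rmorphN /=; ring.
rewrite pmulrn_lge0 // oppr_ge0 => xx_le0.
by apply/eqP; rewrite -mul_conjC_eq0 eq_le xx_le0 mul_conjC_ge0.
Qed.

Lemma psd_proj1 n (u : 'cV[C]_n) : psd (Defs.proj1 u).
Proof.
move=> v; rewrite /Defs.proj1 !mulmxA -mulmxA -[adjmx v *m u]adjmxK adjmxM adjmxK.
by rewrite mxE big_ord1 !mxE mulrC mul_conjC_ge0.
Qed.

Lemma psdZ n (c : C) (X : 'M[C]_n) : 0 <= c -> psd X -> psd (c *: X).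
Proof.
by move=> c_ge0 pX v; rewrite -scalemxAr -scalemxAl mxE mulr_ge0 ?pX.
Qed.

Lemma is_state_delta_mx n (i : 'I_n) : is_state (delta_mx i i : 'M[C]_n).
Proof.
have -> : delta_mx i i = Defs.proj1 (delta_mx i 0 : 'cV[C]_n).
  by rewrite /Defs.proj1 adjmx_delta_col mul_delta_mx.
split; [exact: hermitian_proj1 | exact: psd_proj1 |].
by rewrite /Defs.proj1 mxtrace_mulC adjmx_delta_col mul_delta_mx trace_mx11 mxE !eqxx.
Qed.

Lemma psd_mxtrace_ge0 n (X : 'M[C]_n) : psd X -> 0 <= \tr X.
Proof. by move=> pX; apply: sumr_ge0 => i _; apply: psd_diag. Qed.

Lemma is_state_gt0 n (X : 'M[C]_n) : is_state X -> (0 < n)%N.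
Proof.
case: n X => // X [_ _]; rewrite /mxtrace big_ord0 => /eqP.
by rewrite eq_sym oner_eq0.
Qed.

(* When the trace vanishes, X = 0 by psd_mxtrace_eq0, so any state will do. *)
Definition normalize n (i0 : 'I_n) (X : 'M[C]_n) : 'M[C]_n :=
  let p := complex.Re (\tr X) in
  if p == 0 then delta_mx i0 i0 else (p^-1)%:C%C *: X.

Section Normalize.
Variables (n : nat) (i0 : 'I_n) (X : 'M[C]_n).
Hypotheses (hX : Defs.hermitian X) (pX : psd X).

Let trXE : \tr X = (complex.Re (\tr X))%:C%C.
Proof. exact/conj_fixed_Re/geC0_conj/psd_mxtrace_ge0. Qed.

Lemma is_state_normalize : is_state (normalize i0 X).
Proof.
rewrite /normalize; case: ifP => [_|/negbT p_neq0]; first exact: is_state_delta_mx.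
split; [exact: hermitian_realZ | |].
- apply: psdZ pX; rewrite ler0c invr_ge0.
  by have := psd_mxtrace_ge0 pX; rewrite lecE => /andP[].
- by rewrite mxtraceZ [X in _ * X]trXE -rmorphM /= mulVf.
Qed.

Lemma normalizeK : (complex.Re (\tr X))%:C%C *: normalize i0 X = X.
Proof.
rewrite /normalize; case: ifP => [/eqP p0|/negbT p_neq0].
  by rewrite p0 scale0r; apply/esym/psd_mxtrace_eq0 => //; rewrite trXE p0.
by rewrite scalerA -rmorphM /= divff // scale1r.
Qed.

End Normalize.

End PositiveOperators.

Section ConditionalOperator.
Variable R : realType.
Local Notation C := R[i].
Variables (dA dB : nat) (u : 'cV[C]_dA) (rho : 'M[C]_(dA * dB)).

(* The operator (<u| (x) 1) rho (|u> (x) 1) on B; the cast identifies 'M_(1 * dB) with 'M_dB. *)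
Definition cond_op : 'M[C]_dB :=
  castmx (mul1n dB, mul1n dB) ((adjmx u *t 1%:M) *m rho *m (u *t 1%:M)).

Lemma tens1_cond_op :
  (1%:M : 'M[C]_1) *t cond_op = (adjmx u *t 1%:M) *m rho *m (u *t 1%:M).
Proof. by rewrite tens_scalar1mx castmxK. Qed.

Lemma proj1_tens_cond_op :
  (Defs.proj1 u *t 1%:M) *m rho *m (Defs.proj1 u *t 1%:M) = Defs.proj1 u *t cond_op.
Proof.
have -> : Defs.proj1 u *t 1%:M = (u *t 1%:M) *m (adjmx u *t (1%:M : 'M[C]_dB)).
  by rewrite tensmx_mul mulmx1.
transitivity ((u *t 1%:M) *m ((1%:M : 'M[C]_1) *t cond_op) *m (adjmx u *t 1%:M)).
  by rewrite tens1_cond_op !mulmxA.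
by rewrite !tensmx_mul mulmx1 mul1mx mulmx1.
Qed.

Lemma hermitian_cond_op : Defs.hermitian rho -> Defs.hermitian cond_op.
Proof.
move=> hrho.
have : (1%:M : 'M[C]_1) *t adjmx cond_op = 1%:M *t cond_op.
  rewrite -[X in X *t _]adjmx1 -adjmx_tens tens1_cond_op.
  by rewrite !adjmxM !adjmx_tens adjmxK adjmx1 hrho !mulmxA.
by rewrite !tens_scalar1mx => /(can_inj (castmxK _ _)).
Qed.

Lemma psd_cond_op : psd rho -> psd cond_op.
Proof.
move=> prho v; have := prho (u *t v).
have -> : adjmx (u *t v) = ((1%:M : 'M[C]_1) *t adjmx v) *m (adjmx u *t 1%:M).
  by rewrite adjmx_tens tensmx_mul mul1mx mulmx1.
have -> : u *t v = (u *t 1%:M) *m ((1%:M : 'M[C]_1) *t v).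
  by rewrite tensmx_mul mul1mx mulmx1.
suff -> : (1%:M *t adjmx v) *m (adjmx u *t 1%:M) *m rho *m ((u *t 1%:M) *m (1%:M *t v))
        = (1%:M : 'M[C]_1) *t (adjmx v *m cond_op *m v).
  by rewrite tens_scalar1mx castmxE !ord1.
transitivity (((1%:M : 'M[C]_1) *t adjmx v) *m ((1%:M : 'M[C]_1) *t cond_op)
                *m ((1%:M : 'M[C]_1) *t v)).
  by rewrite tens1_cond_op !mulmxA.
by rewrite !tensmx_mul !mulmx1.
Qed.

Lemma mxtrace_cond_op : adjmx u *m u = 1%:M ->
  \tr cond_op = \tr ((Defs.proj1 u *t 1%:M) *m rho *m (Defs.proj1 u *t 1%:M)).
Proof.
move=> u_normal.
by rewrite proj1_tens_cond_op mxtrace_tens /Defs.proj1 mxtrace_mulC u_normal mxtrace1 mul1r.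
Qed.

End ConditionalOperator.

Section ProjectiveMeasurement.
Variable R : realType.
Local Notation C := R[i].
Variables (dA dB : nat) (U : 'M[C]_dA).
Hypothesis unitaryU : Defs.unitary U.

Local Notation P l := (Defs.proj1 (col l U)).
Local Notation Q l := (Defs.proj1 (col l U) *t (1%:M : 'M[C]_dB)).
Local Notation Pi := (@measA R dA dB U).

Lemma col_adjmx_mul l m : adjmx (col l U) *m col m U = (l == m)%:R%:M.
Proof.
apply/matrixP => i j; rewrite !ord1.
have /(congr1 (fun M : 'M[C]_dA => M l m)) := unitaryU; rewrite !mxE => <-.
by apply: eq_bigr => k _; rewrite !mxE.
Qed.

Lemma proj1_col_mul l m : P l *m P m = (l == m)%:R *: P l.
Proof.
rewrite /Defs.proj1 mulmxA -[col l U *m _ *m _]mulmxA col_adjmx_mul.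
by rewrite mul_mx_scalar -scalemxAl; case: eqP => [->|_]; rewrite ?scale0r.
Qed.

Lemma proj1_col_tens_mul l m : Q l *m Q m = (l == m)%:R *: Q l.
Proof. by rewrite tensmx_mul proj1_col_mul mulmx1 tensmxZl. Qed.

Lemma hermitian_proj1_col_tens l : Defs.hermitian (Q l).
Proof. by apply: hermitian_tens; [exact: hermitian_proj1 | exact: adjmx1]. Qed.

Lemma sum_proj1_col : \sum_l P l = 1%:M.
Proof.
rewrite -(mulmx1C unitaryU); apply/matrixP => i j; rewrite summxE !mxE.
by apply: eq_bigr => k _; rewrite !mxE big_ord1 !mxE.
Qed.

Fact measA_is_linear : linear Pi.
Proof.
move=> c X Y; rewrite /measA scaler_sumr -big_split; apply: eq_bigr => l _.
by rewrite mulmxDr mulmxDl -scalemxAr -scalemxAl.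
Qed.

HB.instance Definition _ :=
  GRing.isLinear.Build C 'M[C]_(dA * dB) 'M[C]_(dA * dB) _ Pi measA_is_linear.

Lemma mxtrace_measA_mul X Y : \tr (Pi X *m Y) = \tr (X *m Pi Y).
Proof.
rewrite /measA mulmx_suml mulmx_sumr !raddf_sum /=; apply: eq_bigr => l _.
by rewrite -!mulmxA mxtrace_mulC !mulmxA.
Qed.

Lemma adjmx_measA X : adjmx (Pi X) = Pi (adjmx X).
Proof.
rewrite /measA adjmx_sum; apply: eq_bigr => l _.
by rewrite !adjmxM hermitian_proj1_col_tens mulmxA.
Qed.

Lemma measA_idem X : Pi (Pi X) = Pi X.
Proof.
rewrite [Pi (Pi X)]/measA; apply: eq_bigr => l _.
rewrite /measA mulmx_sumr mulmx_suml (bigD1 l) //= big1 ?addr0 => [|m /negbTE ml].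
  by rewrite !mulmxA proj1_col_tens_mul eqxx scale1r -mulmxA proj1_col_tens_mul eqxx scale1r.
by rewrite !mulmxA proj1_col_tens_mul eq_sym ml scale0r !mul0mx.
Qed.

Lemma mxtrace_measA X : \tr (Pi X) = \tr X.
Proof.
rewrite /measA raddf_sum /=.
transitivity (\tr ((\sum_l Q l) *m X)); last first.
  by rewrite -tensmx_suml sum_proj1_col tensmx11 mul1mx.
rewrite mulmx_suml raddf_sum /=; apply: eq_bigr => l _.
by rewrite mxtrace_mulC mulmxA proj1_col_tens_mul eqxx scale1r.
Qed.

Lemma measA_orth X Y : \tr (adjmx (X - Pi X) *m Pi Y) = 0.
Proof.
rewrite adjmxB adjmx_measA -mxtrace_measA_mul linearB /= measA_idem subrr.
by rewrite mul0mx mxtrace0.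
Qed.

Lemma hs_norm2_sub_measA X : hs_norm2 (X - Pi X) = hs_norm2 X - hs_norm2 (Pi X).
Proof. by have := hs_norm2D_orth (measA_orth X X); rewrite subrK => ->; rewrite addrK. Qed.

Lemma hs_norm2_sub_measA_le X chi : Pi chi = chi ->
  hs_norm2 (X - Pi X) <= hs_norm2 (X - chi).
Proof.
move=> chi_fixed.
have -> : X - chi = (X - Pi X) + Pi (X - chi) by rewrite linearB /= chi_fixed addrA subrK.
by rewrite (hs_norm2D_orth (measA_orth X (X - chi))) lerDl hs_norm2_ge0.
Qed.

Lemma measA_proj1_tens k (Y : 'M[C]_dB) : Pi (P k *t Y) = P k *t Y.
Proof.
rewrite /measA (bigD1 k) //= big1 ?addr0 => [|m /negbTE mk].
  by rewrite !tensmx_mul proj1_col_mul eqxx scale1r proj1_col_mul eqxx scale1r mulmx1 mul1mx.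
by rewrite !tensmx_mul proj1_col_mul mk scale0r mul0mx tens0mx.
Qed.

Lemma measA_cq_fixed (p : 'I_dA -> R) (chis : 'I_dA -> 'M[C]_dB) :
  let chi := \sum_k (p k)%:C%C *: (P k *t chis k) in Pi chi = chi.
Proof. by rewrite /= linear_sum; apply: eq_bigr => k _; rewrite linearZ /= measA_proj1_tens. Qed.

Lemma measA_cond_op (rho : 'M[C]_(dA * dB)) : Pi rho = \sum_l P l *t cond_op (col l U) rho.
Proof. by apply: eq_bigr => l _; rewrite proj1_tens_cond_op. Qed.

Lemma sum_mxtrace_cond_op (rho : 'M[C]_(dA * dB)) : \sum_l \tr (cond_op (col l U) rho) = \tr rho.
Proof.
rewrite -mxtrace_measA /measA raddf_sum /=; apply: eq_bigr => l _.
by rewrite mxtrace_cond_op // col_adjmx_mul eqxx.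
Qed.

Lemma measA_cq_state (rho : 'M[C]_(dA * dB)) : is_state rho -> cq_state (Pi rho).
Proof.
move=> state_rho; have [hrho prho tr_rho] := state_rho.
have /andP[_ dB_gt0] : (0 < dA)%N && (0 < dB)%N by rewrite -muln_gt0 (is_state_gt0 state_rho).
pose X l := cond_op (col l U) rho.
exists U, (fun l => complex.Re (\tr (X l))), (fun l => normalize (Ordinal dB_gt0) (X l)).
split => //.
- move=> l; have := psd_mxtrace_ge0 (psd_cond_op (col l U) prho).
  by rewrite lecE => /andP[].
- by rewrite -raddf_sum /= sum_mxtrace_cond_op tr_rho.
- by move=> l; apply: is_state_normalize; [apply: hermitian_cond_op | apply: psd_cond_op].
rewrite measA_cond_op; apply: eq_bigr => l _.
by rewrite -tensmxZr normalizeK //; [apply: hermitian_cond_op | apply: psd_cond_op].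
Qed.

End ProjectiveMeasurement.

Lemma inf_eq_sub_sup (R : realType) (S T : set R) (a : R) :
  T !=set0 -> has_ubound T ->
  (forall t, T t -> S (a - t)) -> (forall s, S s -> exists2 t, T t & a - t <= s) ->
  inf S = a - sup T.
Proof.
move=> T0 ubT TS ST.
have lbS : lbound S (a - sup T).
  move=> s /ST [t Tt le_s]; apply: le_trans le_s; rewrite lerD2l lerN2.
  exact: ub_le_sup.
apply/eqP; rewrite eq_le lb_le_inf ?andbT; last 2 first.
- by case: T0 => t /TS St; exists (a - t).
- exact: lbS.
rewrite lerBrDr addrC -lerBrDr; apply: ge_sup => // t Tt.
rewrite lerBrDr addrC -lerBrDr; apply: ge_inf (TS _ Tt).
by exists (a - sup T).
Qed.

Theorem mainTheorem6 (R : realType) (dA dB : nat)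
  (EA : 'I_(dA * dA) -> 'M[R[i]]_dA) (EB : 'I_(dB * dB) -> 'M[R[i]]_dB)
  (rho : 'M[R[i]]_(dA * dB)) :
  herm_onb EA -> herm_onb EB -> is_state rho ->
  DG rho = D12 EA EB rho.
Proof.
move=> hA hB state_rho; have [hrho _ _] := state_rho.
have M12_measA U : M12 EA EB (measA U rho) ^+ 2 = hs_norm2 (measA U rho).
  by apply: M12_sqr => //; rewrite /Defs.hermitian adjmx_measA hrho.
rewrite /DG /D12 M12_sqr //; apply: inf_eq_sub_sup.
- exists (M12 EA EB (measA 1%:M rho) ^+ 2), 1%:M => //=.
  by rewrite /Defs.unitary adjmx1 mulmx1.
- exists (hs_norm2 rho) => _ [U unitaryU <-].
  rewrite M12_measA -subr_ge0 -hs_norm2_sub_measA //.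
  exact: hs_norm2_ge0.
- move=> _ [U unitaryU <-]; rewrite M12_measA -hs_norm2_sub_measA //.
  by exists (measA U rho); first exact: measA_cq_state.
- move=> _ [chi [U [p [chis [unitaryU _ _ _ ->]]]] <-].
  exists (M12 EA EB (measA U rho) ^+ 2); first by exists U.
  by rewrite M12_measA -hs_norm2_sub_measA // hs_norm2_sub_measA_le // measA_cq_fixed.
Qed.
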